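(* Greedy charger placement is not optimal in general. Consider the directed graph with vertices $O, c_0, c_1, c_2, c_3, c_4, c_5, D$ and links (with delay functions of the link's own flow $x$): $O\to c_0$: $10$; $c_0\to D$: $10$; $O\to c_4$: $x$; $c_4\to c_3$: $0$; $c_3\to D$: $1.1$; $c_4\to c_2$: $0$; $c_2\to c_5$: $0$; $c_5\to D$: $x$; $O\to c_1$: $0$; $c_1\to c_5$: $1.1$. There is a single OD pair $(O,D)$ with demand $1$, all of type $F_2$ (must charge exactly once), and charging self-loops have zero delay. A charger always exists at $c_0$; one must choose a set $S\subseteq\{c_1,c_2,c_3\}$ with $|S|=2$ of additional charger locations, the objective being the total delay $c_d=\sum_l x_l d_l(x_l)$ at Nash equilibrium of the network with chargers at $\{c_0\}\cup S$. Then: (i) with a single added charger, the equilibrium total delay is $2.1$ for $S=\{c_1\}$, $2$ for $S=\{c_2\}$, and $2.1$ for $S=\{c_3\}$; (ii) for $S=\{c_1,c_2\}$ and $S=\{c_2,c_3\}$ the equilibrium total delay is $2$; (iii) for $S=\{c_1,c_3\}$ the equilibrium total delay is $1.6$. Consequently the greedy algorithm (which adds one location at a time, each time the one minimizing the equilibrium total delay) selects $c_2$ first and ends with total delay $2$, whereas the optimal choice $\{c_1,c_3\}$ achieves $1.6$.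
   Context: Model: non-atomic congestion game on a directed graph; a charger at vertex $v$ is a self-loop $(v,v)$; an $F_2$ agent's feasible routes are directed paths (distinct vertices) from $O$ to $D$ containing exactly one charging self-loop at a vertex of the path where a charger is placed. Route cost is the sum of link delays evaluated at the link flows. A Nash (Wardrop) equilibrium is a feasible route-flow assignment in which every route carrying positive flow has minimal cost among feasible routes. Total delay is $c_d=\sum_{l} x_l\,d_l(x_l)$ summed over all links (including charger self-loops, which here contribute zero). *)

From HB Require Import structures.
From mathcomp Require Import all_boot all_order all_algebra.
Set Implicit Arguments. Unset Strict Implicit. Unset Printing Implicit Defensive.
Import Order.TTheory GRing.Theory Num.Theory.
Local Open Scope ring_scope.

Section Model.
Variables (R : realFieldType) (V : finType).
(* E u v      : there is a link u -> v (at most one link per ordered pair)  *)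
(* dc c x     : delay of the charging self-loop (c,c) at flow x             *)
Variables (E : rel V) (dl : V -> V -> R -> R) (dc : V -> R -> R)
          (ch : {set V}) (o d : V) (dem : R).

Fixpoint seqs_upto (k : nat) : seq (seq V) :=
  if k is k'.+1 then [::] :: [seq x :: s | x <- enum V, s <- seqs_upto k']
  else [:: [::]].

Definition is_OD_path (p : seq V) : bool :=
  if p is x :: s then [&& x == o, path E x s, last x s == d & uniq p]
  else false.

(* an F2 route: a simple o-d path together with the (unique) vertex of the
   path at which the charging self-loop is taken; a charger must be there *)
Definition F2route := (seq V * V)%type.

Definition feasibleF2 (r : F2route) : bool :=
  [&& is_OD_path r.1, r.2 \in r.1 & r.2 \in ch].

Definition routes : seq F2route :=
  [seq r <- [seq (p, c) | p <- undup (seqs_upto #|V|), c <- enum V]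
   | feasibleF2 r].

Definition links_of (p : seq V) : seq (V * V) := zip p (behead p).

Definition lflow (f : F2route -> R) (u v : V) : R :=
  \sum_(r <- routes | (u, v) \in links_of r.1) f r.
Definition cflow (f : F2route -> R) (c : V) : R :=
  \sum_(r <- routes | r.2 == c) f r.

Definition route_cost (f : F2route -> R) (r : F2route) : R :=
  \sum_(e <- links_of r.1) dl e.1 e.2 (lflow f e.1 e.2)
  + dc r.2 (cflow f r.2).

Definition total_delay (f : F2route -> R) : R :=
  \sum_(u : V) \sum_(v : V | E u v) lflow f u v * dl u v (lflow f u v)
  + \sum_(c in ch) cflow f c * dc c (cflow f c).

Definition feasible_flow (f : F2route -> R) : Prop :=
  (forall r, r \in routes -> 0 <= f r) /\ \sum_(r <- routes) f r = dem.

Definition nash (f : F2route -> R) : Prop :=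
  feasible_flow f /\
  forall r r', r \in routes -> r' \in routes -> 0 < f r ->
    route_cost f r <= route_cost f r'.

End Model.

Inductive vert := vO | c0 | c1 | c2 | c3 | c4 | c5 | vD.

Definition vert2o (v : vert) : 'I_8 :=
  match v with
  | vO => inord 0 | c0 => inord 1 | c1 => inord 2 | c2 => inord 3
  | c3 => inord 4 | c4 => inord 5 | c5 => inord 6 | vD => inord 7 end.
Definition o2vert (i : 'I_8) : option vert :=
  match val i with
  | 0 => Some vO | 1 => Some c0 | 2 => Some c1 | 3 => Some c2
  | 4 => Some c3 | 5 => Some c4 | 6 => Some c5 | 7 => Some vD | _ => None end.
Lemma vert2oK : pcancel vert2o o2vert.
Proof. by case; rewrite /o2vert /= inordK. Qed.
HB.instance Definition _ := Finite.copy vert (pcan_type vert2oK).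

Definition exE : rel vert := fun u v =>
  match u, v with
  | vO, c0 | c0, vD | vO, c4 | c4, c3 | c3, vD | c4, c2 | c2, c5 | c5, vD
  | vO, c1 | c1, c5 => true
  | _, _ => false end.

Definition exdl (R : realFieldType) (u v : vert) (x : R) : R :=
  match u, v with
  | vO, c0 => 10%:R
  | c0, vD => 10%:R
  | vO, c4 => x
  | c4, c3 => 0
  | c3, vD => 11%:R / 10%:R
  | c4, c2 => 0
  | c2, c5 => 0
  | c5, vD => x
  | vO, c1 => 0
  | c1, c5 => 11%:R / 10%:R
  | _, _ => 0 end.

Definition exdc (R : realFieldType) (c : vert) (x : R) : R := 0.

(* "the total delay at Nash equilibrium with chargers at {c0} ∪ S is val":
   an equilibrium exists, and every equilibrium has total delay val.
   Single OD pair (O,D), demand 1, all of type F2. *)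
Definition eq_total_delay (R : realFieldType) (S : {set vert}) (val : R) : Prop :=
  let ch := c0 |: S in
  (exists f, nash exE (@exdl R) (@exdc R) ch vO vD 1 f) /\
  forall f, nash exE (@exdl R) (@exdc R) ch vO vD 1 f ->
    total_delay exE (@exdl R) (@exdc R) ch vO vD f = val.

(* With chargers only at c0..c3, every O-D path passes through at most one
   charger, so a route is determined by its charger and the game reduces to a
   Wardrop problem on the flows y c along the four paths path_at c, with
   explicit link loads, path costs and total delay.  In every configuration
   the path through c0 costs 20 while every other path costs at most 2.1, so
   it is unused; comparing the at most two remaining path costs then fixes the
   equilibrium flows, and hence the total delay, uniquely. *)

From HB Require Import structures.
From mathcomp Require Import all_boot all_order all_algebra.
From mathcomp Require Import ring lra.
Set Implicit Arguments. Unset Strict Implicit. Unset Printing Implicit Defensive.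
Import Order.TTheory GRing.Theory Num.Theory.
Local Open Scope ring_scope.

Section Routes.
Variables (R : realFieldType) (V : finType) (E : rel V) (ch : {set V}) (o d : V).

Lemma mem_seqs_upto k (s : seq V) : (size s <= k)%N -> s \in seqs_upto V k.
Proof.
elim: k s => [|k IHk] [|x s] //= s_le; rewrite inE ?eqxx //=.
by apply: (allpairs_f (fun x s => x :: s)); [rewrite mem_enum | exact: IHk].
Qed.

Lemma mem_routes r : (r \in routes E ch o d) = feasibleF2 E ch o d r.
Proof.
rewrite mem_filter andb_idr // => /and3P [OD_p _ _]; case: r OD_p => p c /= OD_p.
apply: (allpairs_f (fun p c => (p, c))); last by rewrite mem_enum.
rewrite mem_undup mem_seqs_upto // -(card_uniqP _) ?max_card //.
by case: p OD_p => // x s /and4P [].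
Qed.

Lemma uniq_routes : uniq (routes E ch o d).
Proof.
rewrite filter_uniq // allpairs_uniq ?undup_uniq ?enum_uniq //.
by move=> [p c] [p' c'] _ _ [-> ->].
Qed.

Definition path_flow (f : F2route V -> R) (p : seq V) : R :=
  \sum_(r <- routes E ch o d | r.1 == p) f r.

Lemma sum_routes_by_path (Ps : seq (seq V)) (P : pred (seq V)) f :
  uniq Ps -> {in routes E ch o d, forall r, r.1 \in Ps} ->
  \sum_(r <- routes E ch o d | P r.1) f r = \sum_(p <- Ps | P p) path_flow f p.
Proof.
move=> uniq_Ps routes_Ps; rewrite /path_flow (exchange_big_dep (fun r => P r.1)) /=.
  rewrite [LHS]big_seq_cond [RHS]big_seq_cond; apply: eq_bigr => r /andP [r_in Pr].
  rewrite big_const_seq (@eq_count _ _ (pred1 r.1) _ Ps).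
    by rewrite count_uniq_mem ?routes_Ps //= addr0.
  by move=> p /=; rewrite eq_sym; have [->|_] := eqVneq p r.1; rewrite ?Pr ?andbF.
by move=> p r Pp /eqP ->.
Qed.

End Routes.

(* Equality on vert is inherited from 'I_8 through inord and does not
   compute; concrete comparisons go through these codes instead. *)
Definition vcode (v : vert) : nat :=
  match v with
  | vO => 0 | c0 => 1 | c1 => 2 | c2 => 3 | c3 => 4 | c4 => 5 | c5 => 6 | vD => 7
  end.

Lemma vcode_inj : injective vcode. Proof. by do 2 case. Qed.

Lemma eq_vertE (x y : vert) : (x == y) = (vcode x == vcode y)%N.
Proof. by rewrite (inj_eq vcode_inj). Qed.

Ltac vert_simpl := repeat rewrite ?inE /= ?eqseq_cons ?eq_vertE /=.

Definition path_at (c : vert) : seq vert :=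
  match c with
  | c0 => [:: vO; c0; vD]
  | c1 => [:: vO; c1; c5; vD]
  | c2 => [:: vO; c4; c2; c5; vD]
  | c3 => [:: vO; c4; c3; vD]
  | _ => [::]
  end.

Definition route_at (c : vert) : F2route vert := (path_at c, c).

Notation candidates := [:: c0; c1; c2; c3].
Notation OD_paths := [seq path_at c | c <- candidates].

Lemma is_OD_pathE p : is_OD_path exE vO vD p = (p \in OD_paths).
Proof.
apply/idP/idP; last by rewrite !inE => /or4P [] /eqP ->; vert_simpl.
case: p => [|x s] //= /and4P [/eqP -> p_path p_last _]; move: p_path p_last.
do 6 try (case: s => [|y s] /=; [by vert_simpl; try case | case: y => /=; try by case]).
Qed.

Lemma eq_path_at a c : a \in candidates -> (path_at a == path_at c) = (a == c).
Proof.
rewrite -[path_at a == _](inj_eq (inj_map vcode_inj)) eq_vertE.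
by rewrite !inE => /or4P [] /eqP ->; case: c.
Qed.

Lemma mem_path_at a c : a \in candidates -> c \in candidates ->
  (a \in path_at c) = (a == c).
Proof.
rewrite -[a \in path_at c](mem_map vcode_inj) eq_vertE.
by rewrite !inE => /or4P [] /eqP -> /or4P [] /eqP ->.
Qed.

Lemma uniq_OD_paths : uniq OD_paths.
Proof.
rewrite map_inj_in_uniq; first by rewrite -(map_inj_uniq vcode_inj).
by move=> a b a_cand _ /eqP; rewrite eq_path_at // => /eqP.
Qed.

Lemma zip_behead_map (T U : Type) (g : T -> U) (p : seq T) :
  zip (map g p) (behead (map g p)) = [seq (g e.1, g e.2) | e <- zip p (behead p)].
Proof. by case: p => //= x p; elim: p x => //= y p IHp x; rewrite IHp. Qed.

Lemma mem_links_vcode u v p : ((u, v) \in links_of p) =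
  ((vcode u, vcode v) \in zip (map vcode p) (behead (map vcode p))).
Proof.
have vcode2_inj : injective (fun e : vert * vert => (vcode e.1, vcode e.2)).
  by move=> [a b] [a' b'] /= [/vcode_inj -> /vcode_inj ->].
by rewrite zip_behead_map; exact: (esym (mem_map vcode2_inj _ (u, v))).
Qed.

Notation vertices := [:: vO; c0; c1; c2; c3; c4; c5; vD].

Lemma big_vert (R : realFieldType) (P : pred vert) (F : vert -> R) :
  \sum_(u | P u) F u = \sum_(u <- vertices | P u) F u.
Proof.
apply: perm_big; apply: uniq_perm; first exact: index_enum_uniq.
  by rewrite -(map_inj_uniq vcode_inj).
by move=> u; rewrite mem_index_enum -(mem_map vcode_inj); case: u.
Qed.

Section ReducedGame.
Variable R : realFieldType.
Implicit Types y : vert -> R.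

Definition link_load y (u v : vert) : R :=
  match u, v with
  | vO, c0 | c0, vD => y c0
  | vO, c1 | c1, c5 => y c1
  | c4, c2 | c2, c5 => y c2
  | c4, c3 | c3, vD => y c3
  | vO, c4 => y c2 + y c3
  | c5, vD => y c1 + y c2
  | _, _ => 0
  end.

Definition path_cost y (c : vert) : R :=
  match c with
  | c0 => 20%:R
  | c1 => 11%:R / 10%:R + (y c1 + y c2)
  | c2 => (y c2 + y c3) + (y c1 + y c2)
  | c3 => (y c2 + y c3) + 11%:R / 10%:R
  | _ => 0
  end.

Definition path_delay y : R :=
  20%:R * y c0 + (y c2 + y c3) ^+ 2 + 11%:R / 10%:R * y c3
  + (y c1 + y c2) ^+ 2 + 11%:R / 10%:R * y c1.

(* y c is the flow on path_at c; paths without a charger carry none. *)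
Definition path_wardrop (ch : {set vert}) y : Prop :=
  [/\ forall c, c \notin ch -> y c = 0,
      {in ch, forall c, 0 <= y c},
      y c0 + y c1 + y c2 + y c3 = 1 &
      {in ch &, forall c c', 0 < y c -> path_cost y c <= path_cost y c'}].

End ReducedGame.

Section Chargers.
Variables (R : realFieldType) (ch : {set vert}).
Hypothesis ch_candidates : {subset ch <= candidates}.

Lemma mem_routes_at r :
  (r \in routes exE ch vO vD) = (r.2 \in ch) && (r == route_at r.2).
Proof.
case: r => p c; rewrite mem_routes /feasibleF2 /= is_OD_pathE.
case ch_c: (c \in ch); rewrite ?andbF // andbT.
have c_cand := ch_candidates ch_c.
rewrite /route_at xpair_eqE eqxx andbT; apply/andP/eqP => [[] | ->].
  by move=> /mapP [a a_cand ->]; rewrite mem_path_at // => /eqP ->.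
by rewrite map_f // mem_path_at.
Qed.

Lemma routes_OD r : r \in routes exE ch vO vD -> r.1 \in OD_paths.
Proof. by rewrite mem_routes -is_OD_pathE => /and3P []. Qed.

Definition flow_at (f : F2route vert -> R) (c : vert) : R :=
  path_flow exE ch vO vD f (path_at c).

Lemma flow_atE f c : flow_at f c = if c \in ch then f (route_at c) else 0.
Proof.
rewrite /flow_at /path_flow.
transitivity (\sum_(r <- routes exE ch vO vD | r == route_at c) f r).
  rewrite big_seq_cond [RHS]big_seq_cond; apply: eq_bigl => r.
  case r_in: (r \in routes _ _ _ _) => //=.
  move: r_in; rewrite mem_routes_at => /andP [ch_r /eqP ->] /=.
  by rewrite xpair_eqE eq_path_at ?ch_candidates // andbb.
rewrite (eq_bigr (fun=> f (route_at c))) => [|r /eqP -> //].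
rewrite big_const_seq count_uniq_mem ?uniq_routes // mem_routes_at /= eqxx andbT.
by case: (c \in ch); rewrite //= addr0.
Qed.

Lemma sum_routes_flow_at f : \sum_(r <- routes exE ch vO vD) f r =
  flow_at f c0 + flow_at f c1 + flow_at f c2 + flow_at f c3.
Proof.
rewrite (@sum_routes_by_path _ _ _ _ _ _ OD_paths xpredT).
- by rewrite big_map !big_cons big_nil addr0 !addrA.
- exact: uniq_OD_paths.
- exact: routes_OD.
Qed.

Lemma lflow_load f u v : lflow exE ch vO vD f u v = link_load (flow_at f) u v.
Proof.
rewrite /lflow (@sum_routes_by_path _ _ _ _ _ _ OD_paths (fun p => (u, v) \in links_of p)).
- rewrite big_map /link_load /flow_at; move: (path_flow _ _ _ _ f) => y.
  rewrite !big_cons big_nil !mem_links_vcode.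
  by case: u; case: v; rewrite /= ?addr0.
- exact: uniq_OD_paths.
- exact: routes_OD.
Qed.

Lemma route_cost_at f c : c \in candidates ->
  route_cost exE (@exdl R) (@exdc R) ch vO vD f (route_at c) = path_cost (flow_at f) c.
Proof.
rewrite !inE => /or4P [] /eqP ->;
  rewrite /route_cost /exdc /= !big_cons big_nil /= ?lflow_load /=;
  move: (flow_at f) => y; ring.
Qed.

Lemma total_delay_flow_at f :
  total_delay exE (@exdl R) (@exdc R) ch vO vD f = path_delay (flow_at f).
Proof.
rewrite /total_delay [X in _ + X]big1 => [|c _]; last by rewrite /exdc mulr0.
rewrite addr0 big_vert !big_cons big_nil /= !big_vert !big_cons !big_nil /=.
by rewrite !lflow_load /=; move: (flow_at f) => y; rewrite /path_delay; ring.
Qed.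

Lemma route_at_routes c : c \in ch -> route_at c \in routes exE ch vO vD.
Proof. by move=> ch_c; rewrite mem_routes_at ch_c eqxx. Qed.

Lemma nash_path_wardrop f :
  nash exE (@exdl R) (@exdc R) ch vO vD 1 f -> path_wardrop ch (flow_at f).
Proof.
move=> [[f_ge0 f_sum] f_eq]; split.
- by move=> c /negbTE ch_c; rewrite flow_atE ch_c.
- by move=> c ch_c; rewrite flow_atE ch_c; apply/f_ge0/route_at_routes.
- by rewrite -sum_routes_flow_at.
- move=> c c' ch_c ch_c'; rewrite flow_atE ch_c -!route_cost_at ?ch_candidates //.
  by apply: f_eq; apply: route_at_routes.
Qed.

Lemma path_wardrop_nash y :
  path_wardrop ch y -> nash exE (@exdl R) (@exdc R) ch vO vD 1 (fun r => y r.2).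
Proof.
move=> [y_off y_ge0 y_sum y_eq].
have flowE : flow_at (fun r => y r.2) =1 y.
  by move=> c; rewrite flow_atE; case: ifPn => // /y_off ->.
have costE c : c \in ch ->
    route_cost exE (@exdl R) (@exdc R) ch vO vD (fun r => y r.2) (route_at c) =
    path_cost y c.
  by move=> ch_c; rewrite route_cost_at ?ch_candidates // /path_cost !flowE.
split; first split.
- by move=> r; rewrite mem_routes_at => /andP [/y_ge0].
- by rewrite sum_routes_flow_at !flowE.
move=> r r'; rewrite !mem_routes_at => /andP [ch_r /eqP ->] /andP [ch_r' /eqP ->].
by rewrite !costE //; exact: y_eq.
Qed.

End Chargers.

Lemma eq_total_delay_wardrop (R : realFieldType) (S : {set vert}) (val : R) :
  {subset c0 |: S <= candidates} ->
  (exists y : vert -> R, path_wardrop (c0 |: S) y) ->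
  (forall y : vert -> R, path_wardrop (c0 |: S) y -> path_delay y = val) ->
  eq_total_delay S val.
Proof.
move=> sub [y wy] delay_val; split.
  by exists (fun r => y r.2); exact: path_wardrop_nash.
by move=> f /(nash_path_wardrop sub) /delay_val <-; exact: total_delay_flow_at.
Qed.

Ltac wardrop_lra :=
  repeat match goal with
  | H : 0 < ?x -> _, h : 0 < ?x |- _ => specialize (H h)
  | H : 0 < ?x -> _, h : ?x <= 0 |- _ => clear H
  | H : 0 < ?x -> _ |- _ => case: (ltrP 0 x) => ?
  end; lra.

Lemma eq_total_delay_c1 (R : realFieldType) :
  eq_total_delay [set c1] (21%:R / 10%:R : R).
Proof.
apply: eq_total_delay_wardrop => [c | | y [y_off y_ge0 y_sum y_eq]].
- by rewrite !inE => /orP [] /eqP ->; rewrite eqxx ?orbT.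
- exists (fun c => if c is c1 then 1 else 0 : R); split.
  + by case=> //; rewrite !inE eqxx ?orbT.
  + by move=> c _; case: c => /=; lra.
  + by rewrite /=; lra.
  + by move=> c c'; rewrite !inE => /orP [] /eqP -> /orP [] /eqP -> /= => ?; lra.
have c2E : y c2 = 0 by apply: y_off; rewrite !inE !eq_vertE.
have c3E : y c3 = 0 by apply: y_off; rewrite !inE !eq_vertE.
move: (y_eq c0 c1) (y_ge0 c0) (y_ge0 c1).
rewrite !inE !eqxx ?orbT /= => /(_ isT isT) h01 /(_ isT) y0_ge0 /(_ isT) y1_ge0.
have [c0E c1E] : y c0 = 0 /\ y c1 = 1 by split; wardrop_lra.
by rewrite /path_delay c0E c1E c2E c3E; field.
Qed.

Lemma eq_total_delay_c2 (R : realFieldType) :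
  eq_total_delay [set c2] (2%:R : R).
Proof.
apply: eq_total_delay_wardrop => [c | | y [y_off y_ge0 y_sum y_eq]].
- by rewrite !inE => /orP [] /eqP ->; rewrite eqxx ?orbT.
- exists (fun c => if c is c2 then 1 else 0 : R); split.
  + by case=> //; rewrite !inE eqxx ?orbT.
  + by move=> c _; case: c => /=; lra.
  + by rewrite /=; lra.
  + by move=> c c'; rewrite !inE => /orP [] /eqP -> /orP [] /eqP -> /= => ?; lra.
have c1E : y c1 = 0 by apply: y_off; rewrite !inE !eq_vertE.
have c3E : y c3 = 0 by apply: y_off; rewrite !inE !eq_vertE.
move: (y_eq c0 c2) (y_ge0 c0) (y_ge0 c2).
rewrite !inE !eqxx ?orbT /= => /(_ isT isT) h02 /(_ isT) y0_ge0 /(_ isT) y2_ge0.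
have [c0E c2E] : y c0 = 0 /\ y c2 = 1 by split; wardrop_lra.
by rewrite /path_delay c0E c2E c1E c3E; field.
Qed.

Lemma eq_total_delay_c3 (R : realFieldType) :
  eq_total_delay [set c3] (21%:R / 10%:R : R).
Proof.
apply: eq_total_delay_wardrop => [c | | y [y_off y_ge0 y_sum y_eq]].
- by rewrite !inE => /orP [] /eqP ->; rewrite eqxx ?orbT.
- exists (fun c => if c is c3 then 1 else 0 : R); split.
  + by case=> //; rewrite !inE eqxx ?orbT.
  + by move=> c _; case: c => /=; lra.
  + by rewrite /=; lra.
  + by move=> c c'; rewrite !inE => /orP [] /eqP -> /orP [] /eqP -> /= => ?; lra.
have c1E : y c1 = 0 by apply: y_off; rewrite !inE !eq_vertE.
have c2E : y c2 = 0 by apply: y_off; rewrite !inE !eq_vertE.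
move: (y_eq c0 c3) (y_ge0 c0) (y_ge0 c3).
rewrite !inE !eqxx ?orbT /= => /(_ isT isT) h03 /(_ isT) y0_ge0 /(_ isT) y3_ge0.
have [c0E c3E] : y c0 = 0 /\ y c3 = 1 by split; wardrop_lra.
by rewrite /path_delay c0E c3E c1E c2E; field.
Qed.

Lemma eq_total_delay_c1c2 (R : realFieldType) :
  eq_total_delay [set c1; c2] (2%:R : R).
Proof.
apply: eq_total_delay_wardrop => [c | | y [y_off y_ge0 y_sum y_eq]].
- by rewrite !inE => /or3P [] /eqP ->; rewrite eqxx ?orbT.
- exists (fun c => if c is c2 then 1 else 0 : R); split.
  + by case=> //; rewrite !inE eqxx ?orbT.
  + by move=> c _; case: c => /=; lra.
  + by rewrite /=; lra.
  + by move=> c c'; rewrite !inE => /or3P [] /eqP -> /or3P [] /eqP -> /= => ?; lra.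
have c3E : y c3 = 0 by apply: y_off; rewrite !inE !eq_vertE.
move: (y_eq c0 c2) (y_eq c1 c2) (y_ge0 c0) (y_ge0 c1) (y_ge0 c2).
rewrite !inE !eqxx ?orbT /= => /(_ isT isT) h02 /(_ isT isT) h12.
move=> /(_ isT) y0_ge0 /(_ isT) y1_ge0 /(_ isT) y2_ge0.
have [c0E c1E c2E] : [/\ y c0 = 0, y c1 = 0 & y c2 = 1] by split; wardrop_lra.
by rewrite /path_delay c0E c1E c2E c3E; field.
Qed.

Lemma eq_total_delay_c2c3 (R : realFieldType) :
  eq_total_delay [set c2; c3] (2%:R : R).
Proof.
apply: eq_total_delay_wardrop => [c | | y [y_off y_ge0 y_sum y_eq]].
- by rewrite !inE => /or3P [] /eqP ->; rewrite eqxx ?orbT.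
- exists (fun c => if c is c2 then 1 else 0 : R); split.
  + by case=> //; rewrite !inE eqxx ?orbT.
  + by move=> c _; case: c => /=; lra.
  + by rewrite /=; lra.
  + by move=> c c'; rewrite !inE => /or3P [] /eqP -> /or3P [] /eqP -> /= => ?; lra.
have c1E : y c1 = 0 by apply: y_off; rewrite !inE !eq_vertE.
move: (y_eq c0 c2) (y_eq c3 c2) (y_ge0 c0) (y_ge0 c2) (y_ge0 c3).
rewrite !inE !eqxx ?orbT /= => /(_ isT isT) h02 /(_ isT isT) h32.
move=> /(_ isT) y0_ge0 /(_ isT) y2_ge0 /(_ isT) y3_ge0.
have [c0E c2E c3E] : [/\ y c0 = 0, y c2 = 1 & y c3 = 0] by split; wardrop_lra.
by rewrite /path_delay c0E c1E c2E c3E; field.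
Qed.

Lemma eq_total_delay_c1c3 (R : realFieldType) :
  eq_total_delay [set c1; c3] (16%:R / 10%:R : R).
Proof.
apply: eq_total_delay_wardrop => [c | | y [y_off y_ge0 y_sum y_eq]].
- by rewrite !inE => /or3P [] /eqP ->; rewrite eqxx ?orbT.
- exists (fun c => match c with c1 | c3 => 1 / 2 | _ => 0 end : R); split.
  + by case=> //; rewrite !inE eqxx ?orbT.
  + by move=> c _; case: c => /=; lra.
  + by rewrite /=; lra.
  + by move=> c c'; rewrite !inE => /or3P [] /eqP -> /or3P [] /eqP -> /= => ?; lra.
have c2E : y c2 = 0 by apply: y_off; rewrite !inE !eq_vertE.
move: (y_eq c0 c1) (y_eq c1 c3) (y_eq c3 c1) (y_ge0 c0) (y_ge0 c1) (y_ge0 c3).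
rewrite !inE !eqxx ?orbT /= => /(_ isT isT) h01 /(_ isT isT) h13 /(_ isT isT) h31.
move=> /(_ isT) y0_ge0 /(_ isT) y1_ge0 /(_ isT) y3_ge0.
have [c0E c1E c3E] : [/\ y c0 = 0, y c1 = 1 / 2 & y c3 = 1 / 2] by split; wardrop_lra.
by rewrite /path_delay c0E c1E c2E c3E; field.
Qed.


Theorem mainTheorem3 (R : realFieldType) :
  (* (i) a single added charger *)
  eq_total_delay [set c1] (21%:R / 10%:R : R) /\
  eq_total_delay [set c2] (2%:R : R) /\
  eq_total_delay [set c3] (21%:R / 10%:R : R) /\
  (* (ii) *)
  eq_total_delay [set c1; c2] (2%:R : R) /\
  eq_total_delay [set c2; c3] (2%:R : R) /\
  (* (iii) *)
  eq_total_delay [set c1; c3] (16%:R / 10%:R : R).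
Proof.
split; first exact: eq_total_delay_c1.
split; first exact: eq_total_delay_c2.
split; first exact: eq_total_delay_c3.
split; first exact: eq_total_delay_c1c2.
split; first exact: eq_total_delay_c2c3.
exact: eq_total_delay_c1c3.
Qed.
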